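(* For every $\lambda\in\Lambda$, $K(Q_\lambda,B)\subset B_0\sqcup B_1$, where $B_0=\{z:|z|<1\}$ and $B_1=\{z:|z-1|<1\}$.
   Context: Let $p$ be a prime, $\mathbb C_p$ with $p$-adic absolute value, $|p|=1/p$. $\Lambda=\{\lambda\in\mathbb C_p:|\lambda-1|<1\}$, $P_\lambda(z)=\frac{\lambda}{p}z^p+\left(1-\frac{\lambda}{p}\right)z^{p+1}$, $\rho=p^{-1/(p-1)}$. Fix $\hat r\in|\mathbb C_p^*|$, $\hat r>1$, $B=\{z:|z|\le\hat r\}$; $\mathcal H(B)$ is the ring of power series $\sum a_iz^i$ convergent on $B$ with norm $\|f\|_B=\sup_i|a_i|\hat r^{\,i}$. Fix $Q\in\mathcal H(B)$ with $\|Q\|_B<\rho$, $Q^*_\lambda=P_\lambda+Q$, and let $h(\lambda)$ be the unique fixed point of $Q^*_\lambda$ in $\{z:|z-1|\le|Q(1)|/p\}$. Define $Q_\lambda(z)=P_\lambda(z+h(\lambda)-1)+Q(z+h(\lambda)-1)+1-h(\lambda)$ for $z\in B$, and $K(Q_\lambda,B)=\{z\in B:Q_\lambda^n(z)\in B\ \forall n\ge0\}$. *)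

From HB Require Import structures.
From mathcomp Require Import all_boot all_order all_algebra.
From mathcomp Require Import all_classical all_reals all_analysis.
Set Implicit Arguments. Unset Strict Implicit. Unset Printing Implicit Defensive.
Import Order.TTheory GRing.Theory Num.Theory.
Local Open Scope ring_scope.

Section Padic.
Variables (R : realType) (K : fieldType) (abs : K -> R).

Definition abs_cvg (u : nat -> K) (l : K) : Prop :=
  forall eps : R, 0 < eps -> exists N : nat, forall n : nat, (N <= n)%N ->
    abs (u n - l) < eps.

Definition abs_cauchy (u : nat -> K) : Prop :=
  forall eps : R, 0 < eps -> exists N : nat, forall m n : nat,
    (N <= m)%N -> (N <= n)%N -> abs (u m - u n) < eps.

(* abs is a complete non-archimedean absolute value on K with |p| = 1/p.
   Together with K algebraically closed, this is the abstract setting of C_p. *)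
Record padic_abs (p : nat) : Prop := PadicAbs {
  abs_eq0 : forall x, abs x = 0 <-> x = 0;
  abs_ge0 : forall x, 0 <= abs x;
  absM : forall x y, abs (x * y) = abs x * abs y;
  abs_ultra : forall x y, abs (x + y) <= Num.max (abs x) (abs y);
  abs_p : abs p%:R = (p%:R)^-1;
  abs_complete : forall u, abs_cauchy u -> exists l, abs_cvg u l
}.

Definition psum (a : nat -> K) (z : K) (n : nat) : K :=
  \sum_(i < n) a i * z ^+ i.

End Padic.

Definition rho (R : realType) (p : nat) : R :=
  (p%:R : R) `^ (- (1 / (p%:R - 1))).

Definition Plam (K : fieldType) (p : nat) (lam z : K) : K :=
  lam / p%:R * z ^+ p + (1 - lam / p%:R) * z ^+ p.+1.

Definition Qlam (K : fieldType) (p : nat) (Qf : K -> K) (lam h z : K) : K :=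
  Plam p lam (z + h - 1) + Qf (z + h - 1) + 1 - h.

From HB Require Import structures.
From mathcomp Require Import all_boot all_order all_algebra.
From mathcomp Require Import all_classical all_reals all_analysis.
From mathcomp Require Import ring.
Set Implicit Arguments. Unset Strict Implicit. Unset Printing Implicit Defensive.
Import Order.TTheory GRing.Theory Num.Theory.
Local Open Scope ring_scope.

(* Since ||Q||_B < rho <= 1, the perturbation Q and the shift 1 - h are
   smaller than 1 on B, and |lambda| = 1.  If |z| >= 1 and |z - 1| >= 1, then
   w := z + h - 1 has |w| = |z| and |w - 1| = |z - 1|, and in
   P_lambda(w) = w^p ((lambda/p)(1 - w) + w) the term (lambda/p)(1 - w) of
   size p|z - 1| dominates, so |Q_lambda(z)| >= p|z|.  The image lies again
   outside B_0 and B_1, hence the orbit grows like p^n and leaves B. *)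

Section UltrametricAbs.
Variables (R : realType) (K : fieldType) (p : nat) (abs : K -> R).
Hypothesis habs : padic_abs abs p.

Lemma abs0 : abs 0 = 0.
Proof. exact: (proj2 (abs_eq0 habs 0) erefl). Qed.

Lemma abs_neq0 {x} : x != 0 -> abs x != 0.
Proof. by move=> x0; apply/eqP => /(abs_eq0 habs) /eqP; rewrite (negbTE x0). Qed.

Lemma abs1 : abs 1 = 1.
Proof.
have e := absM habs 1 1; rewrite mulr1 in e.
by apply: (mulfI (abs_neq0 (oner_neq0 K))); rewrite mulr1 -e.
Qed.

Lemma absX x n : abs (x ^+ n) = abs x ^+ n.
Proof. by elim: n => [|n IH]; rewrite ?abs1 // !exprS (absM habs) IH. Qed.

Lemma absV x : abs x^-1 = (abs x)^-1.
Proof.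
have [->|x0] := eqVneq x 0; first by rewrite invr0 abs0 invr0.
by apply: (mulfI (abs_neq0 x0)); rewrite -(absM habs) !mulfV ?abs1 ?abs_neq0.
Qed.

Lemma absN x : abs (- x) = abs x.
Proof.
have absN1 : abs (-1) = 1.
  have e := absM habs (-1) (-1); rewrite mulrNN mulr1 abs1 in e.
  have : (abs (-1) - 1) * (abs (-1) + 1) = 0 by rewrite mulrDr !mulrBl -e; ring.
  move/eqP; rewrite mulf_eq0 subr_eq0 addr_eq0 => /orP[/eqP //|/eqP e1].
  by have := abs_ge0 habs (-1); rewrite e1 oppr_ge0 ler10.
by rewrite -mulN1r (absM habs) absN1 mul1r.
Qed.

Lemma abs_subC x y : abs (x - y) = abs (y - x).
Proof. by rewrite -absN opprB. Qed.

Lemma abs_add_le x y e : abs x <= e -> abs y <= e -> abs (x + y) <= e.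
Proof. by move=> hx hy; apply: le_trans (abs_ultra habs x y) _; rewrite ge_max hx hy. Qed.

Lemma abs_add_lt x y e : abs x < e -> abs y < e -> abs (x + y) < e.
Proof. by move=> hx hy; apply: le_lt_trans (abs_ultra habs x y) _; rewrite gt_max hx hy. Qed.

Lemma abs_addr_small x y : abs y < abs x -> abs (x + y) = abs x.
Proof.
move=> yx; apply/eqP; rewrite eq_le abs_add_le ?(ltW yx) //=.
have := abs_ultra habs (x + y) (- y); rewrite addrK absN le_max.
by case/orP => // /(lt_le_trans yx); rewrite ltxx.
Qed.

Lemma abs_le_abs_subr1 z : 1 <= abs (z - 1) -> abs z <= abs (z - 1).
Proof. by move=> zs1; rewrite -{1}(subrK 1 z); apply: abs_add_le; rewrite ?abs1. Qed.

Lemma abs_cvg_le (u : nat -> K) l c :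
  abs_cvg abs u l -> (forall n, abs (u n) <= c) -> abs l <= c.
Proof.
move=> ul uc; rewrite leNgt; apply/negP => cl.
have l0 : 0 < abs l by apply: le_lt_trans cl; exact: le_trans (abs_ge0 habs _) (uc 0%N).
have [N hN] := ul _ l0.
have : abs (u N + - (u N - l)) < abs l.
  by apply: abs_add_lt; [exact: le_lt_trans (uc N) cl | rewrite absN; exact: hN].
by rewrite opprB addrA (addrC (u N)) addrK ltxx.
Qed.

Lemma abs_psum_le (a : nat -> K) (w : K) (c r : R) :
  abs w <= r -> (forall i, abs (a i) * r ^+ i <= c) ->
  forall n, abs (psum a w n) <= c.
Proof.
move=> wr ac; have c0 : 0 <= c.
  by apply: le_trans (ac 0%N); rewrite expr0 mulr1 (abs_ge0 habs).
elim=> [|n IH]; first by rewrite /psum big_ord0 abs0.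
rewrite /psum big_ord_recr /=; apply: abs_add_le => //.
rewrite (absM habs) absX; apply: le_trans (ac n).
rewrite ler_wpM2l ?(abs_ge0 habs) // lerXn2r ?nnegrE ?(abs_ge0 habs) //.
exact: le_trans (abs_ge0 habs w) wr.
Qed.

Section Escape.
Variables (Qf : K -> K) (lam h : K) (r : R).
Hypotheses (p_gt1 : (1 < p)%N) (abs_lam : abs lam = 1) (h_near1 : abs (h - 1) < 1)
  (Qf_small : forall w, abs w <= r -> abs (Qf w) < 1).

Let p_gt1R : (1 : R) < p%:R. Proof. by rewrite ltr1n. Qed.
Let p_gt0R : (0 : R) < p%:R. Proof. exact: lt_trans ltr01 p_gt1R. Qed.

Lemma abs_Plam_shift z : 1 <= abs z -> 1 <= abs (z - 1) ->
  abs (Plam p lam (z + h - 1)) = abs z ^+ p * (p%:R * abs (z - 1)).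
Proof.
move=> z1 zs1; set w := z + h - 1.
have w_abs : abs w = abs z.
  by rewrite /w -addrA abs_addr_small // (lt_le_trans h_near1).
have ws1_abs : abs (1 - w) = abs (z - 1).
  rewrite abs_subC /w (_ : z + h - 1 - 1 = z - 1 + (h - 1)); last by ring.
  by rewrite abs_addr_small // (lt_le_trans h_near1).
have lin_abs : abs (lam / p%:R * (1 - w)) = p%:R * abs (z - 1).
  by rewrite !(absM habs) absV (abs_p habs) invrK abs_lam mul1r ws1_abs.
rewrite /Plam (_ : _ + _ = w ^+ p * (lam / p%:R * (1 - w) + w)); last first.
  by rewrite exprS; ring.
rewrite (absM habs) absX w_abs (@abs_addr_small (lam / p%:R * (1 - w)) w) lin_abs // w_abs.
apply: le_lt_trans (abs_le_abs_subr1 zs1) _.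
by rewrite ltr_pMl // (lt_le_trans ltr01 zs1).
Qed.

Lemma Qlam_escape z : 1 <= abs z -> 1 <= abs (z - 1) -> abs z <= r ->
  p%:R * abs z <= abs (Qlam p Qf lam h z).
Proof.
move=> z1 zs1 zr; set w := z + h - 1.
have big_le : p%:R * abs z <= abs z ^+ p * (p%:R * abs (z - 1)).
  apply: le_trans (_ : p%:R * abs (z - 1) <= _).
    by rewrite ler_pM2l // abs_le_abs_subr1.
  apply: ler_peMl; last exact: exprn_ege1.
  by rewrite mulr_ge0 ?(abs_ge0 habs) ?ltW.
have rest_lt1 : abs (Qf w + (1 - h)) < 1.
  apply: abs_add_lt; last by rewrite abs_subC.
  apply: Qf_small.
  by rewrite /w -addrA abs_addr_small // (lt_le_trans h_near1).
rewrite (_ : Qlam _ _ _ _ _ = Plam p lam w + (Qf w + (1 - h))); last first.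
  by rewrite /Qlam /w; ring.
rewrite abs_addr_small abs_Plam_shift //.
apply: lt_le_trans rest_lt1 (le_trans _ big_le).
by rewrite (le_trans (ltW p_gt1R)) // ler_peMr // ltW.
Qed.

Lemma iter_Qlam_escape z :
  1 <= abs z -> 1 <= abs (z - 1) ->
  (forall n, abs (iter n (Qlam p Qf lam h) z) <= r) ->
  forall n, p%:R ^+ n <= abs (iter n (Qlam p Qf lam h) z).
Proof.
move=> z1 zs1 orbit_r n; set f := Qlam p Qf lam h.
suff : p%:R ^+ n <= abs (iter n f z) /\ 1 <= abs (iter n f z - 1) by case.
elim: n => [|n [IH1 IH2]]; first by rewrite expr0.
have fn1 : 1 <= abs (iter n f z) := le_trans (exprn_ege1 n (ltW p_gt1R)) IH1.
have grow := Qlam_escape fn1 IH2 (orbit_r n).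
have fSn_ge : p%:R ^+ n.+1 <= abs (iter n.+1 f z).
  by apply: le_trans grow; rewrite exprS ler_pM2l.
split=> //; have fSn1 : 1 < abs (iter n.+1 f z).
  by apply: lt_le_trans fSn_ge; rewrite exprn_egt1.
by rewrite abs_addr_small ?absN ?abs1 ?ltW.
Qed.

End Escape.
End UltrametricAbs.

Lemma natr_expn_unbounded (R : realType) (p : nat) (r : R) :
  (1 < p)%N -> exists n, r < p%:R ^+ n.
Proof.
move=> p_gt1; exists (Num.bound `|r|).
rewrite (le_lt_trans (ler_norm r)) // (lt_trans (archi_boundP (normr_ge0 r))) //.
by rewrite -natrX ltr_nat ltn_expl.
Qed.

Lemma rho_le1 (R : realType) (p : nat) : (1 < p)%N -> rho R p <= 1.
Proof.
move=> p_gt1; rewrite /rho -[X in _ <= X](powRr0 (p%:R : R)).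
rewrite ler_powR ?ler1n ?(ltnW p_gt1) //.
by rewrite oppr_le0 divr_ge0 // subr_ge0 ler1n ltnW.
Qed.

Theorem proposition3p7
  (R : realType) (K : closedFieldType) (p : nat) (abs : K -> R)
  (hp : prime p) (habs : padic_abs abs p)
  (rhat : R) (hr_val : exists w : K, w != 0 /\ abs w = rhat) (hr1 : 1 < rhat)
  (a : nat -> K) (Qf : K -> K)
  (hQconv : forall eps : R, 0 < eps -> exists N : nat, forall i : nat,
              (N <= i)%N -> abs (a i) * rhat ^+ i < eps)
  (hQf : forall z : K, abs z <= rhat -> abs_cvg abs (psum a z) (Qf z))
  (hQnorm : exists c : R, c < rho R p /\ forall i : nat, abs (a i) * rhat ^+ i <= c)
  (lam : K) (hlam : abs (lam - 1) < 1)
  (h : K) (hfix : Plam p lam h + Qf h = h)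
  (hdisc : abs (h - 1) <= abs (Qf 1) / p%:R) :
  forall z : K, (forall n : nat, abs (iter n (Qlam p Qf lam h) z) <= rhat) ->
    abs z < 1 \/ abs (z - 1) < 1.
Proof.
move=> z orbit_B; have p_gt1 := prime_gt1 hp.
have p_gt1R : (1 : R) < p%:R by rewrite ltr1n.
have [c [c_rho a_c]] := hQnorm.
have c_lt1 : c < 1 := lt_le_trans c_rho (rho_le1 R p_gt1).
have Qf_small w : abs w <= rhat -> abs (Qf w) < 1.
  move=> wB; apply: le_lt_trans c_lt1.
  exact: (abs_cvg_le habs (hQf w wB) (abs_psum_le habs wB a_c)).
have h_near1 : abs (h - 1) < 1.
  apply: le_lt_trans hdisc _; rewrite ltr_pdivrMr ?(lt_trans ltr01) // mul1r.
  by rewrite (lt_trans _ p_gt1R) // Qf_small // (abs1 habs) ltW.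
have abs_lam : abs lam = 1.
  by rewrite -[lam](subrK 1) addrC (abs_addr_small habs) (abs1 habs).
apply/orP; rewrite !ltNge -negb_and; apply/negP => /andP[z1 zs1].
have [N rhat_lt] := natr_expn_unbounded rhat p_gt1.
have := iter_Qlam_escape habs p_gt1 abs_lam h_near1 Qf_small z1 zs1 orbit_B N.
by apply/negP; rewrite -ltNge (le_lt_trans (orbit_B N)).
Qed.
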